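(* Let $H$ be a monoid, with identity $1_H$ and group of units $H^\times$. The following are equivalent: (a) $\mathcal{P}_{\mathrm{fin},1}(H)$ is UmF; (b) $H\setminus H^\times$ is an almost-breakable subsemigroup of $H$, the group of units $H^\times$ has order $\le 2$, $H$ is the trivial ideal extension of $H\setminus H^\times$ by $H^\times$, and $\mathcal{P}_{\mathrm{fin},1}\big((H\setminus H^\times)\cup\{1_H\}\big)$ is UmF.
   Context: For a monoid $H$, $\mathcal{P}_{\mathrm{fin},1}(H)$ denotes the set of all non-empty finite subsets of $H$ containing $1_H$; it is a monoid under setwise multiplication $XY=\{xy: x\in X, y\in Y\}$, with identity $\{1_H\}$ (the reduced finitary power monoid of $H$). Divisibility in a monoid $M$: $x\mid_M y$ iff $y\in MxM=\{uxv: u,v\in M\}$; $x,y$ are associated if each divides the other; $x$ properly divides $y$ if $x\mid_M y$ but $y\nmid_M x$. A unit-divisor is an element dividing $1_M$; otherwise it is a non-unit-divisor. An irreducible of $M$ is a non-unit-divisor $a$ such that $a\neq xy$ for all non-unit-divisors $x,y$ that both properly divide $a$. Factorizations: a factorization of $x\in M$ is a finite word $a_1\ast\cdots\ast a_n$ (possibly empty) in the free monoid over the set of irreducibles of $M$ with $a_1\cdots a_n=x$. For words $\mathfrak a,\mathfrak b$ over $M$, write $\mathfrak a\sqsubseteq\mathfrak b$ if $\mathfrak a$ is, up to replacing letters by associated elements, a subword (subsequence) of some permutation of $\mathfrak b$; $\mathfrak a,\mathfrak b$ are equivalent if $\mathfrak a\sqsubseteq\mathfrak b\sqsubseteq\mathfrak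 a$. A factorization $\mathfrak a$ of $x$ is minimal if there is no factorization $\mathfrak b$ of $x$ with $\mathfrak b\sqsubseteq\mathfrak a$ and $\mathfrak a\not\sqsubseteq\mathfrak b$. $M$ is factorable if every non-unit-divisor is a product of irreducibles, and $M$ is UmF if it is factorable and any two minimal factorizations of the same element are equivalent. A semigroup $S$ is almost-breakable if for all $x,y\in S$, $xy\in\{x,y\}$ or $yx\in\{x,y\}$. For disjoint semigroups $G$ and $K$, the trivial ideal extension of $K$ by $G$ is the semigroup on $G\cup K$ extending the operations of $G$ and $K$ by $xy=yx=y$ for all $x\in G$, $y\in K$; ''$H$ is the trivial ideal extension of $H\setminus H^\times$ by $H^\times$'' means the multiplication of $H$ coincides with this operation, i.e. $uy=yu=y$ for all $u\in H^\times$, $y\in H\setminus H^\times$. *)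

(* Sub-monoids are described by a domain predicate [D] on the
   carrier; all notions of a monoid M below quantify only over elements
   satisfying [D]. *)
From Stdlib Require Import List Permutation.
Import ListNotations.
Set Implicit Arguments.

Section MonoidNotions.
Variables (T : Type) (D : T -> Prop) (mul : T -> T -> T) (one : T).

Definition mdivides (x y : T) : Prop :=
  exists u v, D u /\ D v /\ y = mul (mul u x) v.

Definition massociated (x y : T) : Prop := mdivides x y /\ mdivides y x.

Definition mproperly_divides (x y : T) : Prop := mdivides x y /\ ~ mdivides y x.

Definition unit_divisor (x : T) : Prop := mdivides x one.

Definition irreducible (a : T) : Prop :=
  D a /\ ~ unit_divisor a /\
  ~ (exists x y, D x /\ D y /\ ~ unit_divisor x /\ ~ unit_divisor y /\
        mproperly_divides x a /\ mproperly_divides y a /\ a = mul x y).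

Definition wprod (w : list T) : T := fold_right mul one w.

Definition factorization (w : list T) (x : T) : Prop :=
  Forall irreducible w /\ wprod w = x.

Inductive subword : list T -> list T -> Prop :=
| subword_nil : subword [] []
| subword_skip : forall x l1 l2, subword l1 l2 -> subword l1 (x :: l2)
| subword_keep : forall x l1 l2, subword l1 l2 -> subword (x :: l1) (x :: l2).

Definition wle (a b : list T) : Prop :=
  exists a' p, Forall2 massociated a a' /\ Permutation b p /\ subword a' p.

Definition wequiv (a b : list T) : Prop := wle a b /\ wle b a.

Definition minimal_factorization (a : list T) (x : T) : Prop :=
  factorization a x /\
  ~ (exists b, factorization b x /\ wle b a /\ ~ wle a b).

Definition factorable : Prop :=
  forall x, D x -> ~ unit_divisor x -> exists a, factorization a x.

Definition UmF : Prop :=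
  factorable /\
  forall x a b, D x -> minimal_factorization a x -> minimal_factorization b x ->
    wequiv a b.

End MonoidNotions.

Section PowerMonoid.
Variables (H : Type) (mul : H -> H -> H) (one : H).

Definition is_monoid : Prop :=
  (forall x y z, mul x (mul y z) = mul (mul x y) z) /\
  (forall x, mul one x = x) /\ (forall x, mul x one = x).

Definition is_unit (u : H) : Prop := exists v, mul u v = one /\ mul v u = one.

Definition set_mul (X Y : H -> Prop) : H -> Prop :=
  fun z => exists x y, X x /\ Y y /\ z = mul x y.

Definition set_one : H -> Prop := fun z => z = one.

Definition finite_set (X : H -> Prop) : Prop :=
  exists l : list H, forall x, X x -> In x l.

Definition Pfin1_dom (S : H -> Prop) (X : H -> Prop) : Prop :=
  finite_set X /\ X one /\ (forall x, X x -> S x).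

Definition Pfin1_UmF (S : H -> Prop) : Prop :=
  UmF (Pfin1_dom S) set_mul set_one.

Definition subsemigroup (S : H -> Prop) : Prop :=
  forall x y, S x -> S y -> S (mul x y).

Definition almost_breakable (S : H -> Prop) : Prop :=
  forall x y, S x -> S y ->
    (mul x y = x \/ mul x y = y) \/ (mul y x = x \/ mul y x = y).

Definition units_order_le2 : Prop :=
  exists u0 u1, forall u, is_unit u -> u = u0 \/ u = u1.

Definition trivial_ideal_extension : Prop :=
  forall u y, is_unit u -> ~ is_unit y -> mul u y = y /\ mul y u = y.

End PowerMonoid.

From Stdlib Require Import Arith List Permutation Wf_nat Lia.
From Stdlib Require Import Classical ClassicalEpsilon FunctionalExtensionality PropExtensionality.
Import ListNotations.
Set Implicit Arguments.

(* Every element of P_fin,1(S) contains 1, so X divides Y only if X is a subset of Y.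
   Hence associated sets are equal, {1} is the only unit-divisor, the irreducibles are
   the sets that are not a product of two proper factors, and UmF says that any two
   minimal factorizations of a set are permutations of each other.

   (a) => (b): for a <> 1 the set {1, a} is irreducible, and each failure of a condition
   in (b) yields a set with two essentially different minimal factorizations, such as
   {1,u}{1,z} = {1,u}{1,uz} when u^2 = 1 and uz is not in {1,u,z}.  Applied to
   {1,a}^3 = {1,a}{1,a^2} this first shows a^2 in {1, a} for every a <> 1, so units
   other than 1 are involutions and non-units are idempotent.

   (b) => (a): if there is a unit u <> 1, then E = {1, u} is a central idempotent with
   E Y = Y ∪ {u}.  Every irreducible other than E lies in P_fin,1(K), where K is the set
   of non-units together with 1, and a minimal factorization of X consists of one copy
   of E if u is in X (none otherwise) and a minimal factorization of the K-part of X in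
   P_fin,1(K).  UmF of P_fin,1(K) then gives UmF of P_fin,1(H); if 1 is the only unit,
   K is all of H. *)

(** * Submultisets *)

Section Submultiset.
Variable T : Type.
Implicit Types a c l p : list T.

Definition submultiset c a : Prop := exists r, Permutation a (c ++ r).

Lemma subword_app_r c r : subword c (c ++ r).
Proof.
  induction c as [|x c IH]; simpl.
  - induction r; constructor; assumption.
  - now constructor.
Qed.

Lemma subword_submultiset c p : subword c p -> submultiset c p.
Proof.
  induction 1 as [|x c p _ [r Hr]|x c p _ [r Hr]].
  - now exists [].
  - exists (x :: r). now apply Permutation_cons_app.
  - exists r. now apply perm_skip.
Qed.

Lemma submultiset_subword c a :
  submultiset c a <-> exists p, Permutation a p /\ subword c p.
Proof.
  split.
  - intros [r Hr]. exists (c ++ r). split; [exact Hr | apply subword_app_r].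
  - intros (p & Hp & Hs). destruct (subword_submultiset Hs) as [r Hr].
    exists r. now rewrite Hp.
Qed.

Lemma Permutation_submultiset c a : Permutation a c -> submultiset c a.
Proof. intros Hp. exists []. now rewrite app_nil_r. Qed.

Lemma submultiset_length c a : submultiset c a -> length c <= length a.
Proof. intros [r Hr]. rewrite (Permutation_length Hr), length_app. lia. Qed.

Lemma submultiset_Permutation c a :
  submultiset c a -> length a <= length c -> Permutation a c.
Proof.
  intros [[|x r] Hr] Hl.
  - now rewrite app_nil_r in Hr.
  - apply Permutation_length in Hr. rewrite length_app in Hr. simpl in Hr. lia.
Qed.

Lemma submultiset_incl c a : submultiset c a -> incl c a.
Proof.
  intros [r Hr] x Hx. apply (Permutation_in _ (Permutation_sym Hr)), in_or_app. now left.
Qed.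

Lemma submultiset_remove dec x l : submultiset (remove dec x l) l.
Proof.
  induction l as [|y l [r Hr]]; simpl.
  - now exists [].
  - destruct (dec x y).
    + exists (y :: r). now apply Permutation_cons_app.
    + exists r. now apply perm_skip.
Qed.

Lemma submultiset_cons_remove dec x l : In x l -> submultiset (x :: remove dec x l) l.
Proof.
  intros Hx. destruct (in_split _ _ Hx) as (l1 & l2 & ->).
  replace (remove dec x (l1 ++ x :: l2)) with (remove dec x (l1 ++ l2))
    by (rewrite !remove_app; simpl; now destruct (dec x x)).
  destruct (submultiset_remove dec x (l1 ++ l2)) as [r Hr].
  exists r. rewrite <- Permutation_middle. now apply perm_skip.
Qed.

End Submultiset.

Lemma set_ext {A : Type} (X Y : A -> Prop) : (forall z, X z <-> Y z) -> X = Y.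
Proof.
  intros HXY. apply functional_extensionality. intros z.
  now apply propositional_extensionality.
Qed.

Lemma set_neq {A : Type} (X Y : A -> Prop) z : X z -> ~ Y z -> X <> Y.
Proof. now intros Hx Hy ->. Qed.

Lemma strict_subset_witness {A : Type} (X Y : A -> Prop) :
  (forall z, Y z -> X z) -> Y <> X -> exists w, X w /\ ~ Y w.
Proof.
  intros HYX Hne. apply NNPP. intros Hno. apply Hne, set_ext. intros z.
  split; [apply HYX|]. intros Hz. apply NNPP. intros Hy. apply Hno. now exists z.
Qed.

Definition classic_eq_dec {T : Type} (x y : T) : {x = y} + {x <> y} :=
  excluded_middle_informative (x = y).

Lemma cover_strict_subset {A : Type} (X Y : A -> Prop) l :
  (forall z, X z -> In z l) -> (forall z, Y z -> X z) -> Y <> X ->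
  exists l', length l' < length l /\ forall z, Y z -> In z l'.
Proof.
  intros Hl HYX Hne. destruct (strict_subset_witness HYX Hne) as (w & Hw & Hnw).
  exists (remove classic_eq_dec w l). split.
  - now apply remove_length_lt, Hl.
  - intros z Hz. apply in_in_remove; [intros ->; contradiction | now apply Hl, HYX].
Qed.

Definition set_inter {A : Type} (X Y : A -> Prop) : A -> Prop := fun z => X z /\ Y z.

(** * The reduced finitary power monoid *)

Section PowerMonoid.
Variables (H : Type) (mul : H -> H -> H) (one : H).
Hypothesis mulA : forall x y z, mul x (mul y z) = mul (mul x y) z.
Hypothesis mul1x : forall x, mul one x = x.
Hypothesis mulx1 : forall x, mul x one = x.

Local Notation smul := (set_mul mul).
Local Notation sone := (set_one one).
Local Notation wp := (wprod smul sone).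

Lemma smulA X Y Z : smul X (smul Y Z) = smul (smul X Y) Z.
Proof.
  apply set_ext. intros z. split.
  - intros (x & w & Hx & (y & t & Hy & Ht & ->) & ->).
    exists (mul x y), t. rewrite mulA. repeat split; trivial. now exists x, y.
  - intros (w & t & (x & y & Hx & Hy & ->) & Ht & ->).
    exists x, (mul y t). rewrite mulA. repeat split; trivial. now exists y, t.
Qed.

Lemma smul1X X : smul sone X = X.
Proof.
  apply set_ext. intros z. split.
  - intros (x & y & -> & Hy & ->). now rewrite mul1x.
  - intros Hz. exists one, z. now rewrite mul1x.
Qed.

Lemma smulX1 X : smul X sone = X.
Proof.
  apply set_ext. intros z. split.
  - intros (x & y & Hx & -> & ->). now rewrite mulx1.
  - intros Hz. exists z, one. now rewrite mulx1.
Qed.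

Lemma smul_incl_l {X Y : H -> Prop} {z : H} : Y one -> X z -> smul X Y z.
Proof. intros HY Hz. exists z, one. now rewrite mulx1. Qed.

Lemma smul_incl_r {X Y : H -> Prop} {z : H} : X one -> Y z -> smul X Y z.
Proof. intros HX Hz. exists one, z. now rewrite mul1x. Qed.

Lemma wp_app a b : wp (a ++ b) = smul (wp a) (wp b).
Proof.
  induction a as [|A a IH]; simpl.
  - now rewrite smul1X.
  - now rewrite IH, smulA.
Qed.

Lemma wp_has_one a : Forall (fun A => A one) a -> wp a one.
Proof. induction 1; simpl; [reflexivity | now apply smul_incl_l]. Qed.

Lemma wp_incl {a A z} : Forall (fun A => A one) a -> In A a -> A z -> wp a z.
Proof.
  induction 1 as [|B a HB Ha IH]; simpl; [contradiction|].
  intros [-> | HA] Hz.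
  - apply smul_incl_l; [now apply wp_has_one | exact Hz].
  - exact (smul_incl_r HB (IH HA Hz)).
Qed.

Section Pfin1.
Variable S : H -> Prop.
Hypothesis S1 : S one.

Local Notation D := (Pfin1_dom one S).

Lemma Pfin1_has_one X : D X -> X one.
Proof. now intros (_ & HX & _). Qed.

Lemma Pfin1_sone : D sone.
Proof.
  split; [|split; [reflexivity|]].
  - exists [one]. intros x ->. now left.
  - now intros x ->.
Qed.

Lemma Pfin1_subset {X Y : H -> Prop} : D X -> Y one -> (forall z, Y z -> X z) -> D Y.
Proof.
  intros ([l Hl] & _ & HS) HY HYX. split; [|split; [exact HY|]].
  - exists l. auto.
  - auto.
Qed.

Lemma Pfin1_smul X Y :
  (forall x y, S x -> S y -> S (mul x y)) -> D X -> D Y -> D (smul X Y).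
Proof.
  intros Smul ([lX HlX] & HX1 & HXS) ([lY HlY] & HY1 & HYS). split; [|split].
  - exists (flat_map (fun x => map (mul x) lY) lX).
    intros z (x & y & Hx & Hy & ->). apply in_flat_map. exists x. auto using in_map.
  - now apply smul_incl_l.
  - intros z (x & y & Hx & Hy & ->). auto.
Qed.

Lemma Pfin1_wp a :
  (forall x y, S x -> S y -> S (mul x y)) -> Forall D a -> D (wp a).
Proof.
  intros Smul. induction 1; simpl; [exact Pfin1_sone | now apply Pfin1_smul].
Qed.

Lemma mdivides_incl X Y : mdivides D smul X Y -> forall z, X z -> Y z.
Proof.
  intros (U & V & DU & DV & ->) z Hz.
  exact (smul_incl_l (Pfin1_has_one DV) (smul_incl_r (Pfin1_has_one DU) Hz)).
Qed.

Lemma mdivides_refl X : mdivides D smul X X.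
Proof.
  exists sone, sone. split; [apply Pfin1_sone | split; [apply Pfin1_sone|]].
  now rewrite smul1X, smulX1.
Qed.

Lemma massociated_eq X Y : massociated D smul X Y <-> X = Y.
Proof.
  split.
  - intros [HXY HYX]. apply set_ext. intros z.
    split; [apply (mdivides_incl HXY) | apply (mdivides_incl HYX)].
  - intros ->. split; apply mdivides_refl.
Qed.

Lemma Forall2_massociated_eq a b : Forall2 (massociated D smul) a b <-> a = b.
Proof.
  split.
  - induction 1 as [|A B a b HAB _ IH]; trivial. apply massociated_eq in HAB. congruence.
  - intros <-. induction a; constructor; trivial. now apply massociated_eq.
Qed.

Lemma wle_submultiset a b : wle D smul a b <-> submultiset a b.
Proof.
  rewrite submultiset_subword. split.
  - intros (a' & p & Ha & Hp & Hs). apply Forall2_massociated_eq in Ha. subst a'. now exists p.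
  - intros (p & Hp & Hs). exists a, p. repeat split; trivial. now apply Forall2_massociated_eq.
Qed.

Lemma wequiv_Permutation a b : wequiv D smul a b <-> Permutation a b.
Proof.
  unfold wequiv. rewrite !wle_submultiset. split.
  - intros [Hab Hba]. now apply submultiset_Permutation, submultiset_length.
  - intros Hp. split; apply Permutation_submultiset; [now apply Permutation_sym | exact Hp].
Qed.

Lemma unit_divisor_sone X : D X -> unit_divisor D smul sone X <-> X = sone.
Proof.
  intros DX. split.
  - intros Hdiv. apply set_ext. intros z. split; [apply (mdivides_incl Hdiv)|].
    intros ->. now apply Pfin1_has_one.
  - intros ->. apply mdivides_refl.
Qed.

Lemma mproperly_divides_factor X Y A :
  D X -> D Y -> A = smul X Y ->
  (mproperly_divides D smul X A <-> X <> A) /\ (mproperly_divides D smul Y A <-> Y <> A).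
Proof.
  intros DX DY ->. unfold mproperly_divides.
  assert (HX : mdivides D smul X (smul X Y)).
  { exists sone, Y. split; [apply Pfin1_sone | split; [exact DY|]]. now rewrite smul1X. }
  assert (HY : mdivides D smul Y (smul X Y)).
  { exists X, sone. split; [exact DX | split; [apply Pfin1_sone|]]. now rewrite smulX1. }
  split; split.
  - intros [_ Hn] E. apply Hn. rewrite <- E. apply mdivides_refl.
  - intros Hne. split; [exact HX|]. intros Hdiv. apply Hne. now apply massociated_eq.
  - intros [_ Hn] E. apply Hn. rewrite <- E. apply mdivides_refl.
  - intros Hne. split; [exact HY|]. intros Hdiv. apply Hne. now apply massociated_eq.
Qed.

Definition atom A : Prop :=
  D A /\ A <> sone /\ forall X Y, D X -> D Y -> A = smul X Y -> X = A \/ Y = A.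

Definition atom_fact a X : Prop := Forall atom a /\ wp a = X.

Definition min_atom_fact a X : Prop :=
  atom_fact a X /\ forall b, atom_fact b X -> submultiset b a -> Permutation a b.

Lemma irreducible_atom A : irreducible D smul sone A <-> atom A.
Proof.
  split.
  - intros (DA & Hud & Hirr). split; [exact DA|split].
    + intros E. apply Hud. now apply unit_divisor_sone.
    + intros X Y DX DY E. apply NNPP. intros Hne. apply Hirr. exists X, Y.
      destruct (mproperly_divides_factor DX DY E) as [HX HY].
      rewrite HX, HY, unit_divisor_sone, unit_divisor_sone by assumption.
      refine (conj DX (conj DY (conj _ (conj _ (conj _ (conj _ E)))))); try tauto.
      * intros ->. apply Hne. right. now rewrite E, smul1X.
      * intros ->. apply Hne. left. now rewrite E, smulX1.
  - intros (DA & Hne & Hat). split; [exact DA|split].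
    + now rewrite unit_divisor_sone.
    + intros (X & Y & DX & DY & _ & _ & HX & HY & E).
      destruct (mproperly_divides_factor DX DY E) as [HX' HY'].
      rewrite HX' in HX. rewrite HY' in HY. destruct (Hat X Y DX DY E); contradiction.
Qed.

Lemma factorization_atom_fact a X : factorization D smul sone a X <-> atom_fact a X.
Proof.
  split; intros [Ha HX]; (split; [|exact HX]);
    refine (Forall_impl _ _ Ha); intros A HA; now apply irreducible_atom.
Qed.

Lemma minimal_factorization_min_atom_fact a X :
  minimal_factorization D smul sone a X <-> min_atom_fact a X.
Proof.
  unfold minimal_factorization, min_atom_fact. rewrite factorization_atom_fact.
  split; intros [Ha Hmin]; split; trivial.
  - intros b Hb Hba. apply NNPP. intros Hp. apply Hmin. exists b.
    rewrite factorization_atom_fact, !wle_submultiset.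
    split; [exact Hb | split; [exact Hba |]].
    intros Hab. now apply Hp, submultiset_Permutation, submultiset_length.
  - intros (b & Hb & Hba & Hab). rewrite factorization_atom_fact in Hb.
    rewrite wle_submultiset in Hba, Hab.
    apply Hab, Permutation_submultiset, Permutation_sym. now apply Hmin.
Qed.

Lemma atom_fact_exists X : D X -> X <> sone -> exists a, atom_fact a X.
Proof.
  intros [[l Hl] HX]. revert X Hl HX.
  induction l as [l IH] using (induction_ltof1 _ (@length H)). unfold ltof in IH.
  intros X Hl HX HXne. assert (DX : D X) by (split; [now exists l | exact HX]).
  destruct (classic (atom X)) as [HatX | HnX].
  { exists [X]. split; [now constructor | apply smulX1]. }
  assert (Hsplit : exists P Q, D P /\ D Q /\ X = smul P Q /\ P <> X /\ Q <> X).
  { apply NNPP. intros Hno. apply HnX. split; [exact DX | split; [exact HXne |]].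
    intros P Q DP DQ E. apply NNPP. intros Hne. apply Hno. exists P, Q. tauto. }
  destruct Hsplit as (P & Q & DP & DQ & E & HP & HQ).
  assert (HPX : forall z, P z -> X z)
    by (intros z Hz; rewrite E; exact (smul_incl_l (Pfin1_has_one DQ) Hz)).
  assert (HQX : forall z, Q z -> X z)
    by (intros z Hz; rewrite E; exact (smul_incl_r (Pfin1_has_one DP) Hz)).
  destruct (cover_strict_subset _ Hl HPX HP) as (lP & HlP & HcP).
  destruct (cover_strict_subset _ Hl HQX HQ) as (lQ & HlQ & HcQ).
  destruct (IH lP HlP P HcP (proj2 DP)) as (aP & FP & EP).
  { intros ->. apply HQ. now rewrite E, smul1X. }
  destruct (IH lQ HlQ Q HcQ (proj2 DQ)) as (aQ & FQ & EQ).
  { intros ->. apply HP. now rewrite E, smulX1. }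
  exists (aP ++ aQ). split; [now apply Forall_app|]. now rewrite wp_app, EP, EQ.
Qed.

Lemma Pfin1_UmF_iff :
  Pfin1_UmF mul one S <->
  forall X a b, D X -> min_atom_fact a X -> min_atom_fact b X -> Permutation a b.
Proof.
  unfold Pfin1_UmF, UmF, factorable. split.
  - intros [_ Hu] X a b DX Ha Hb. apply wequiv_Permutation, (Hu X);
      now rewrite ?minimal_factorization_min_atom_fact.
  - intros Hu. split.
    + intros X DX HX. rewrite unit_divisor_sone in HX by exact DX.
      destruct (atom_fact_exists DX HX) as [a Ha]. exists a. now apply factorization_atom_fact.
    + intros X a b DX Ha Hb. apply wequiv_Permutation, (Hu X);
        now rewrite <- ?minimal_factorization_min_atom_fact.
Qed.

Lemma min_atom_fact_of_no_shorter a X :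
  atom_fact a X ->
  (forall b, wp b = X -> incl b a -> length b < length a -> False) ->
  min_atom_fact a X.
Proof.
  intros Ha Hshort. split; [exact Ha|]. intros b [_ Hb] Hba.
  apply submultiset_Permutation; [exact Hba|].
  destruct (Nat.le_gt_cases (length a) (length b)) as [Hle | Hlt]; [exact Hle|].
  exfalso. exact (Hshort b Hb (submultiset_incl Hba) Hlt).
Qed.

End Pfin1.

Section Transfer.
Variables S S' : H -> Prop.
Hypothesis S'S : forall x, S' x -> S x.

Local Notation D := (Pfin1_dom one S).
Local Notation D' := (Pfin1_dom one S').

Lemma Pfin1_dom_mono X : D' X -> D X.
Proof. intros (HF & H1 & HS). split; [exact HF | split; auto]. Qed.

Lemma atom_transfer A : D' A -> atom S A <-> atom S' A.
Proof.
  intros D'A. split; intros (_ & Hne & Hat).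
  - split; [exact D'A | split; [exact Hne|]].
    intros X Y DX DY. apply Hat; now apply Pfin1_dom_mono.
  - split; [now apply Pfin1_dom_mono | split; [exact Hne|]].
    intros X Y DX DY E. apply Hat; trivial.
    + apply (Pfin1_subset D'A (Pfin1_has_one DX)). intros z Hz.
      rewrite E. exact (smul_incl_l (Pfin1_has_one DY) Hz).
    + apply (Pfin1_subset D'A (Pfin1_has_one DY)). intros z Hz.
      rewrite E. exact (smul_incl_r (Pfin1_has_one DX) Hz).
Qed.

Lemma atom_fact_transfer a X :
  D' X -> atom_fact S a X <-> atom_fact S' a X.
Proof.
  intros D'X. split; intros [Ha HX]; (split; [|exact HX]).
  - assert (Ha1 : Forall (fun A => A one) a)
      by (refine (Forall_impl _ _ Ha); intros A HA; exact (Pfin1_has_one (proj1 HA))).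
    apply Forall_forall. intros A HA. rewrite Forall_forall in Ha.
    apply (atom_transfer (A := A)); [|now apply Ha].
    apply (Pfin1_subset D'X (Pfin1_has_one (proj1 (Ha A HA)))).
    intros z Hz. rewrite <- HX. now apply (wp_incl Ha1 HA).
  - refine (Forall_impl _ _ Ha). intros A HA. now apply (atom_transfer (proj1 HA)).
Qed.

Lemma min_atom_fact_transfer a X :
  D' X -> min_atom_fact S a X <-> min_atom_fact S' a X.
Proof.
  intros D'X. split; intros [Ha Hmin];
    (split; [now apply (atom_fact_transfer a D'X) |]);
    intros b Hb; apply Hmin; now apply (atom_fact_transfer b D'X).
Qed.

End Transfer.

Definition pair1 (b : H) : H -> Prop := fun z => z = one \/ z = b.

Lemma smul_pair1_l a Y :
  smul (pair1 a) Y = fun z => Y z \/ exists y, Y y /\ z = mul a y.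
Proof.
  apply set_ext. intros z. split.
  - intros (p & y & [-> | ->] & Hy & ->); [left; now rewrite mul1x | right; now exists y].
  - intros [Hz | (y & Hy & ->)].
    + exists one, z. rewrite mul1x. now split; [left|].
    + exists a, y. now split; [right|].
Qed.

Lemma smul_pair1_r a Y :
  smul Y (pair1 a) = fun z => Y z \/ exists y, Y y /\ z = mul y a.
Proof.
  apply set_ext. intros z. split.
  - intros (y & p & Hy & [-> | ->] & ->); [left; now rewrite mulx1 | right; now exists y].
  - intros [Hz | (y & Hy & ->)].
    + exists z, one. rewrite mulx1. now split; [|split; [left|]].
    + exists y, a. now split; [|split; [right|]].
Qed.

Lemma smul_pair1 a b :
  smul (pair1 a) (pair1 b) = fun z => z = one \/ z = a \/ z = b \/ z = mul a b.
Proof.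
  rewrite smul_pair1_l. apply set_ext. intros z. unfold pair1. split.
  - intros [[-> | ->] | (y & [-> | ->] & ->)]; rewrite ?mulx1; tauto.
  - intros [-> | [-> | [-> | ->]]]; [tauto | | tauto |].
    + right. exists one. rewrite mulx1. tauto.
    + right. exists b. tauto.
Qed.

Lemma pair1_inj a b : a <> one -> pair1 a = pair1 b -> a = b.
Proof.
  intros Ha E. assert (Hb : pair1 b a) by (rewrite <- E; now right).
  now destruct Hb.
Qed.

Lemma subset_pair1 b (Y : H -> Prop) :
  Y one -> (forall z, Y z -> pair1 b z) -> Y = sone \/ Y = pair1 b.
Proof.
  intros Y1 HY. destruct (classic (Y b)) as [Yb | Yb]; [right | left];
    apply set_ext; intros z; split.
  - apply HY.
  - now intros [-> | ->].
  - intros Hz. destruct (HY z Hz) as [-> | ->]; [reflexivity | contradiction].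
  - now intros ->.
Qed.

Lemma atom_pair1 S b : S one -> S b -> b <> one -> atom S (pair1 b).
Proof.
  intros S1 Sb Hb. split; [|split].
  - split; [exists [one; b]; intros z [-> | ->]; simpl; tauto|].
    split; [now left | now intros z [-> | ->]].
  - apply (set_neq b); [now right | exact Hb].
  - intros X Y DX DY E.
    assert (HX : forall z, X z -> pair1 b z)
      by (intros z Hz; rewrite E; exact (smul_incl_l (Pfin1_has_one DY) Hz)).
    destruct (subset_pair1 _ (Pfin1_has_one DX) HX) as [-> | ->]; [right | now left].
    now rewrite E, smul1X.
Qed.

(** * From UmF to the structure of H *)

Section UmFConsequences.
Variable S : H -> Prop.
Hypothesis Smul : forall x y, S x -> S y -> S (mul x y).
Hypothesis umf : forall X a b, Pfin1_dom one S X ->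
  min_atom_fact S a X -> min_atom_fact S b X -> Permutation a b.

Lemma min_atom_fact_pair A B :
  atom S A -> atom S B -> smul A B <> sone -> smul A B <> A -> smul A B <> B ->
  min_atom_fact S [A; B] (smul A B).
Proof.
  intros HA HB HX1 HXA HXB. apply min_atom_fact_of_no_shorter.
  - split; [repeat (apply Forall_cons; [assumption|]); apply Forall_nil|].
    simpl. now rewrite smulX1.
  - intros [|C [|C' b]] Hb Hincl Hlen; simpl in *; [congruence | | lia].
    rewrite smulX1 in Hb. destruct (Hincl C (or_introl eq_refl)) as [<- | [<- | []]]; congruence.
Qed.

Lemma min_atom_fact_cube A :
  atom S A -> smul A (smul A A) <> sone -> smul A (smul A A) <> A ->
  smul A (smul A A) <> smul A A -> min_atom_fact S [A; A; A] (smul A (smul A A)).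
Proof.
  intros HA HX1 HXA HXAA. apply min_atom_fact_of_no_shorter.
  - split; [repeat (apply Forall_cons; [assumption|]); apply Forall_nil|].
    simpl. now rewrite smulX1.
  - intros b Hb Hincl Hlen.
    assert (Hrep : b = repeat A (length b)).
    { apply Forall_eq_repeat, Forall_forall. intros C HC.
      destruct (Hincl C HC) as [<- | [<- | [<- | []]]]; reflexivity. }
    rewrite Hrep in Hb. simpl in Hlen.
    destruct (length b) as [|[|[|n]]]; simpl in Hb; rewrite ?smulX1 in Hb; [congruence.. | lia].
Qed.

Lemma umf_pair A B C E :
  atom S A -> atom S B -> atom S C -> atom S E -> smul A B = smul C E ->
  smul A B <> sone -> smul A B <> A -> smul A B <> B -> smul A B <> C -> smul A B <> E ->
  (A = C /\ B = E) \/ (A = E /\ B = C).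
Proof.
  intros HA HB HC HE Heq HX1 HXA HXB HXC HXE. apply Permutation_length_2.
  apply (umf (X := smul A B)).
  - exact (Pfin1_smul Smul (proj1 HA) (proj1 HB)).
  - now apply min_atom_fact_pair.
  - rewrite Heq in *. now apply min_atom_fact_pair.
Qed.

Lemma umf_no_cube A B :
  atom S A -> atom S B -> smul A (smul A A) = smul A B ->
  smul A B <> sone -> smul A B <> A -> smul A B <> smul A A -> smul A B <> B -> False.
Proof.
  intros HA HB Heq HX1 HXA HXAA HXB.
  assert (Hp : Permutation [A; A; A] [A; B]).
  { apply (umf (X := smul A B)).
    - exact (Pfin1_smul Smul (proj1 HA) (proj1 HB)).
    - rewrite <- Heq in *. now apply min_atom_fact_cube.
    - now apply min_atom_fact_pair. }
  now apply Permutation_length in Hp.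
Qed.

End UmFConsequences.

Definition triple1 (x y : H) : H -> Prop := fun z => z = one \/ z = x \/ z = y.

Lemma subset_triple1 x y (Y : H -> Prop) :
  Y one -> (forall z, Y z -> triple1 x y z) ->
  Y = sone \/ Y = pair1 x \/ Y = pair1 y \/ Y = triple1 x y.
Proof.
  intros Y1 HY.
  destruct (classic (Y x)) as [Yx | Yx]; destruct (classic (Y y)) as [Yy | Yy];
    [right; right; right | right; left | right; right; left | left];
    apply set_ext; intros z; (split; [intros Hz; destruct (HY z Hz) as [-> | [-> | ->]] |]);
    unfold pair1, triple1, set_one in *; intuition congruence.
Qed.

Definition nonunits1 (x : H) : Prop := ~ is_unit mul one x \/ x = one.

Lemma one_is_unit : is_unit mul one one.
Proof. exists one. now rewrite mul1x. Qed.

Lemma is_unit_mul v w : is_unit mul one v -> is_unit mul one w -> is_unit mul one (mul v w).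
Proof.
  intros [v' [Hvv' Hv'v]] [w' [Hww' Hw'w]]. exists (mul w' v'). split.
  - now rewrite <- mulA, (mulA w), Hww', mul1x.
  - now rewrite <- mulA, (mulA v'), Hv'v, mul1x.
Qed.

Section FromUmF.
Local Notation full := (fun _ : H => True).
Local Notation unit := (is_unit mul one).
Hypothesis umf : forall X a b, Pfin1_dom one full X ->
  min_atom_fact full a X -> min_atom_fact full b X -> Permutation a b.

Let full_mul : forall x y, full x -> full y -> full (mul x y) := fun _ _ _ _ => I.

Lemma atom_full_pair1 b : b <> one -> atom full (pair1 b).
Proof. now apply atom_pair1. Qed.

Local Ltac separate_by w :=
  apply (set_neq w); rewrite ?smul_pair1; unfold pair1, triple1, set_one; cbn;
  intuition congruence.

Lemma umf_square a : a <> one -> mul a a = one \/ mul a a = a.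
Proof.
  intros Ha. apply NNPP. intros Hsq.
  assert (Haa1 : mul a a <> one) by tauto. assert (Haaa : mul a a <> a) by tauto.
  assert (Hsq2 : smul (pair1 a) (pair1 a) = fun z => z = one \/ z = a \/ z = mul a a).
  { rewrite smul_pair1. apply set_ext. intros z. tauto. }
  assert (Hcube : smul (pair1 a) (smul (pair1 a) (pair1 a)) = smul (pair1 a) (pair1 (mul a a))).
  { rewrite Hsq2, smul_pair1_l, smul_pair1. apply set_ext. intros z. split.
    - intros [Hz | (y & [-> | [-> | ->]] & ->)]; rewrite ?mulx1; tauto.
    - intros [-> | [-> | [-> | ->]]]; try tauto. right. exists (mul a a). tauto. }
  (* {1,a}^3 = {1,a}{1,a^2}, and this is already {1,a}^2 when a^3 lies in {1,a,a^2}. *)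
  destruct (classic (mul a (mul a a) = one \/ mul a (mul a a) = a \/ mul a (mul a a) = mul a a))
    as [Hc | Hc].
  - assert (Heq : smul (pair1 a) (pair1 a) = smul (pair1 a) (pair1 (mul a a))).
    { rewrite Hsq2, smul_pair1. apply set_ext. intros z. intuition congruence. }
    destruct (umf_pair full_mul umf (atom_full_pair1 Ha) (atom_full_pair1 Ha)
      (atom_full_pair1 Ha) (atom_full_pair1 Haa1) Heq) as [[_ E] | [E _]].
    + separate_by a.
    + separate_by (mul a a).
    + separate_by (mul a a).
    + separate_by (mul a a).
    + separate_by a.
    + apply Haaa. symmetry. exact (pair1_inj Ha E).
    + apply Haaa. symmetry. exact (pair1_inj Ha E).
  - apply (umf_no_cube full_mul umf (atom_full_pair1 Ha) (atom_full_pair1 Haa1) Hcube).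
    + separate_by a.
    + separate_by (mul a a).
    + rewrite Hsq2. separate_by (mul a (mul a a)).
    + separate_by a.
Qed.

Lemma unit_square u : unit u -> u <> one -> mul u u = one.
Proof.
  intros [v [Huv _]] Hu1. destruct (umf_square Hu1) as [Huu | Huu]; [exact Huu|].
  assert (E : mul (mul u u) v = one) by now rewrite Huu.
  rewrite <- mulA, Huv, mulx1 in E. contradiction.
Qed.

Lemma nonunit_idempotent x : ~ unit x -> mul x x = x.
Proof.
  intros Hx. assert (Hx1 : x <> one) by (intros ->; exact (Hx one_is_unit)).
  destruct (umf_square Hx1) as [Hxx | Hxx]; [|exact Hxx].
  exfalso. apply Hx. now exists x.
Qed.

Lemma nonunits_mul_closed x y : ~ unit x -> ~ unit y -> ~ unit (mul x y).
Proof.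
  intros Hx Hy [w [Hw _]]. apply Hx.
  assert (E : mul x (mul (mul x y) w) = mul (mul x y) w)
    by now rewrite !mulA, (nonunit_idempotent Hx).
  rewrite Hw, mulx1 in E. rewrite E. exact one_is_unit.
Qed.

Lemma umf_involution_l u z :
  u <> one -> mul u u = one -> z <> one -> z <> u ->
  mul u z <> one -> mul u z <> u -> mul u z = z.
Proof.
  intros Hu1 Huu Hz1 Hzu Huz1 Huzu. apply NNPP. intros Huzz.
  assert (Hback : mul u (mul u z) = z) by now rewrite mulA, Huu, mul1x.
  assert (Heq : smul (pair1 u) (pair1 z) = smul (pair1 u) (pair1 (mul u z))).
  { rewrite !smul_pair1, Hback. apply set_ext. intros w. tauto. }
  destruct (umf_pair full_mul umf (atom_full_pair1 Hu1) (atom_full_pair1 Hz1)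
    (atom_full_pair1 Hu1) (atom_full_pair1 Huz1) Heq) as [[_ E] | [E _]].
  - separate_by u.
  - separate_by z.
  - separate_by u.
  - separate_by z.
  - separate_by u.
  - apply Huzz. symmetry. exact (pair1_inj Hz1 E).
  - apply Huzu. symmetry. exact (pair1_inj Hu1 E).
Qed.

Lemma umf_involution_r u z :
  u <> one -> mul u u = one -> z <> one -> z <> u ->
  mul z u <> one -> mul z u <> u -> mul z u = z.
Proof.
  intros Hu1 Huu Hz1 Hzu Hzu1 Hzuu. apply NNPP. intros Hzuz.
  assert (Hback : mul (mul z u) u = z) by now rewrite <- mulA, Huu, mulx1.
  assert (Heq : smul (pair1 z) (pair1 u) = smul (pair1 (mul z u)) (pair1 u)).
  { rewrite !smul_pair1, Hback. apply set_ext. intros w. tauto. }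
  destruct (umf_pair full_mul umf (atom_full_pair1 Hz1) (atom_full_pair1 Hu1)
    (atom_full_pair1 Hzu1) (atom_full_pair1 Hu1) Heq) as [[E _] | [E _]].
  - separate_by u.
  - separate_by u.
  - separate_by z.
  - separate_by u.
  - separate_by z.
  - apply Hzuz. symmetry. exact (pair1_inj Hz1 E).
  - exact (Hzu (pair1_inj Hz1 E)).
Qed.

Lemma umf_units_order_le2 : units_order_le2 mul one.
Proof.
  destruct (classic (exists u, unit u /\ u <> one)) as [(u & Hu & Hu1) | Hno].
  - exists one, u. intros v Hv. apply NNPP. intros Hvne.
    assert (Hv1 : v <> one) by tauto. assert (Hvu : v <> u) by tauto.
    pose proof (unit_square Hu Hu1) as Huu. pose proof (unit_square Hv Hv1) as Hvv.
    assert (Huv1 : mul u v <> one).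
    { intros E. apply Hvu. now rewrite <- (mul1x v), <- Huu, <- mulA, E, mulx1. }
    assert (Huvu : mul u v <> u).
    { intros E. apply Hv1. now rewrite <- (mul1x v), <- Huu, <- mulA, E. }
    apply Hu1. rewrite <- (mulx1 u), <- Hvv, mulA.
    now rewrite (umf_involution_l Hu1 Huu Hv1 Hvu Huv1 Huvu).
  - exists one, one. intros v Hv. left. apply NNPP. intros Hv1. apply Hno. now exists v.
Qed.

Lemma umf_trivial_ideal_extension : trivial_ideal_extension mul one.
Proof.
  intros u y Hu Hy. destruct (classic (u = one)) as [-> | Hu1].
  { now rewrite mul1x, mulx1. }
  pose proof (unit_square Hu Hu1) as Huu.
  assert (Hy1 : y <> one) by (intros ->; exact (Hy one_is_unit)).
  assert (Hyu : y <> u) by (intros ->; exact (Hy Hu)).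
  split.
  - apply (umf_involution_l Hu1 Huu Hy1 Hyu).
    + intros E. apply Hyu. now rewrite <- (mul1x y), <- Huu, <- mulA, E, mulx1.
    + intros E. apply Hy1. now rewrite <- (mul1x y), <- Huu, <- mulA, E.
  - apply (umf_involution_r Hu1 Huu Hy1 Hyu).
    + intros E. apply Hyu. now rewrite <- (mulx1 y), <- Huu, mulA, E, mul1x.
    + intros E. apply Hy1. now rewrite <- (mulx1 y), <- Huu, mulA, E.
Qed.

Lemma atom_triple1 x y :
  x <> one -> y <> one -> x <> y -> mul x x = x -> mul y y = y ->
  ~ triple1 x y (mul x y) -> ~ triple1 x y (mul y x) -> atom full (triple1 x y).
Proof.
  intros Hx1 Hy1 Hxy Hxx Hyy Hxy_out Hyx_out. split; [|split].
  - split; [|split; [now left | trivial]].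
    exists [one; x; y]. intros z [-> | [-> | ->]]; simpl; tauto.
  - separate_by x.
  - intros P Q DP DQ E.
    assert (HP : forall z, P z -> triple1 x y z)
      by (intros z Hz; rewrite E; exact (smul_incl_l (Pfin1_has_one DQ) Hz)).
    assert (HQ : forall z, Q z -> triple1 x y z)
      by (intros z Hz; rewrite E; exact (smul_incl_r (Pfin1_has_one DP) Hz)).
    destruct (subset_triple1 _ (Pfin1_has_one DP) HP) as [-> | [-> | [-> | ->]]];
      [right; now rewrite E, smul1X | | | now left];
    destruct (subset_triple1 _ (Pfin1_has_one DQ) HQ) as [-> | [-> | [-> | ->]]];
      try (left; now rewrite E, smulX1); try (now right);
    exfalso; rewrite smul_pair1 in E.
    + assert (Hm : triple1 x y y) by (right; now right).
      rewrite E, Hxx in Hm. cbn in Hm. intuition congruence.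
    + apply Hxy_out. rewrite E. cbn. tauto.
    + apply Hyx_out. rewrite E. cbn. tauto.
    + assert (Hm : triple1 x y x) by (right; now left).
      rewrite E, Hyy in Hm. cbn in Hm. intuition congruence.
Qed.

Lemma umf_almost_breakable : almost_breakable mul (fun x => ~ unit x).
Proof.
  intros x y Hx Hy. apply NNPP. intros Hno.
  pose proof (nonunit_idempotent Hx) as Hxx. pose proof (nonunit_idempotent Hy) as Hyy.
  assert (Hx1 : x <> one) by (intros ->; exact (Hx one_is_unit)).
  assert (Hy1 : y <> one) by (intros ->; exact (Hy one_is_unit)).
  assert (Hxy1 : mul x y <> one)
    by (intros E; apply (nonunits_mul_closed Hx Hy); rewrite E; exact one_is_unit).
  assert (Hyx1 : mul y x <> one)
    by (intros E; apply (nonunits_mul_closed Hy Hx); rewrite E; exact one_is_unit).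
  assert (Hxy : x <> y) by (intros <-; tauto).
  assert (Hxy_out : ~ triple1 x y (mul x y)) by (unfold triple1; tauto).
  assert (Hyx_out : ~ triple1 x y (mul y x)) by (unfold triple1; tauto).
  assert (Heq : smul (pair1 x) (pair1 y) = smul (pair1 x) (triple1 x y)).
  { rewrite smul_pair1, smul_pair1_l. apply set_ext. intros z. unfold triple1. split.
    - intros [-> | [-> | [-> | ->]]]; try tauto. right. exists y. tauto.
    - intros [Hz | (w & [-> | [-> | ->]] & ->)]; rewrite ?mulx1, ?Hxx; tauto. }
  destruct (umf_pair full_mul umf (atom_full_pair1 Hx1) (atom_full_pair1 Hy1)
    (atom_full_pair1 Hx1) (atom_triple1 Hx1 Hy1 Hxy Hxx Hyy Hxy_out Hyx_out) Heq)
    as [[_ E] | [E _]].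
  - separate_by x.
  - separate_by y.
  - separate_by x.
  - separate_by y.
  - separate_by (mul x y).
  - assert (Hm : triple1 x y x) by (right; now left).
    rewrite <- E in Hm. destruct Hm; contradiction.
  - assert (Hm : triple1 x y y) by (right; now right).
    rewrite <- E in Hm. destruct Hm as [Hm | Hm]; [exact (Hy1 Hm) | exact (Hxy (eq_sym Hm))].
Qed.

Lemma umf_nonunits1 : Pfin1_UmF mul one nonunits1.
Proof.
  apply Pfin1_UmF_iff; [now right|].
  intros X a b DX Ha Hb.
  assert (Hsub : forall x, nonunits1 x -> full x) by trivial.
  apply (umf (X := X)); [exact (Pfin1_dom_mono _ Hsub DX) | ..];
    now apply (min_atom_fact_transfer _ Hsub _ DX).
Qed.

End FromUmF.

(** * From the structure of H to UmF *)

Section FromUnitStructure.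
Local Notation full := (fun _ : H => True).
Local Notation unit := (is_unit mul one).
Local Notation DK := (Pfin1_dom one nonunits1).
Hypothesis nonunits_closed : subsemigroup mul (fun x => ~ unit x).
Hypothesis units_le2 : units_order_le2 mul one.
Hypothesis tie : trivial_ideal_extension mul one.
Hypothesis umfK : forall X a b, DK X ->
  min_atom_fact nonunits1 a X -> min_atom_fact nonunits1 b X -> Permutation a b.

Let nonunits1_full : forall x, nonunits1 x -> full x := fun _ _ => I.

Lemma nonunits1_mul x y : nonunits1 x -> nonunits1 y -> nonunits1 (mul x y).
Proof.
  intros [Hx | ->] [Hy | ->]; rewrite ?mul1x, ?mulx1; [left | left | left | right]; auto.
Qed.

Section NontrivialUnit.
Variable u : H.
Hypothesis Hu : unit u.
Hypothesis Hu1 : u <> one.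

Local Notation E := (pair1 u).
Local Notation remove_E := (remove classic_eq_dec E).

Lemma unit_cases v : unit v -> v = one \/ v = u.
Proof.
  destruct units_le2 as (u0 & u1 & Hle). intros Hv.
  destruct (Hle one one_is_unit), (Hle u Hu), (Hle v Hv); subst; auto; congruence.
Qed.

Lemma unit_square_u : mul u u = one.
Proof.
  destruct (unit_cases (is_unit_mul Hu Hu)) as [Huu | Huu]; [exact Huu|].
  destruct Hu as [v [Huv _]]. assert (E : mul (mul u u) v = mul u v) by now rewrite Huu.
  rewrite <- mulA, Huv, mulx1 in E. contradiction.
Qed.

Lemma nonunits1_or_u z : nonunits1 z \/ z = u.
Proof.
  destruct (classic (unit z)) as [Hz | Hz]; [|left; now left].
  destruct (unit_cases Hz) as [-> | ->]; [left; now right | now right].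
Qed.

Lemma not_nonunits1_u : ~ nonunits1 u.
Proof. now intros [Hn | Hn]. Qed.

Lemma smul_E_l Y : Y one -> smul E Y = fun z => Y z \/ z = u.
Proof.
  intros Y1. rewrite smul_pair1_l. apply set_ext. intros z. split.
  - intros [Hz | (y & Hy & ->)]; [now left|].
    destruct (classic (unit y)) as [Uy | Uy].
    + destruct (unit_cases Uy) as [-> | ->]; [right; apply mulx1 | left; now rewrite unit_square_u].
    + left. now rewrite (proj1 (tie Hu Uy)).
  - intros [Hz | ->]; [now left | right; exists one; now rewrite mulx1].
Qed.

Lemma smul_E_r Y : Y one -> smul Y E = fun z => Y z \/ z = u.
Proof.
  intros Y1. rewrite smul_pair1_r. apply set_ext. intros z. split.
  - intros [Hz | (y & Hy & ->)]; [now left|].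
    destruct (classic (unit y)) as [Uy | Uy].
    + destruct (unit_cases Uy) as [-> | ->]; [right; apply mul1x | left; now rewrite unit_square_u].
    + left. now rewrite (proj2 (tie Hu Uy)).
  - intros [Hz | ->]; [now left | right; exists one; now rewrite mul1x].
Qed.

Lemma smul_E_comm Y : Y one -> smul E Y = smul Y E.
Proof. intros Y1. now rewrite smul_E_l, smul_E_r. Qed.

Lemma smul_EE : smul E E = E.
Proof.
  rewrite smul_E_l by now left. apply set_ext. intros z. unfold pair1. tauto.
Qed.

Lemma Pfin1_nonunits_part X : Pfin1_dom one full X -> DK (set_inter X nonunits1).
Proof.
  intros ([l Hl] & X1 & _). split; [|split].
  - exists l. intros z [Hz _]. auto.
  - split; [exact X1 | now right].
  - now intros z [_ Hz].
Qed.

Lemma E_smul_nonunits_part X : X one -> X u -> smul E (set_inter X nonunits1) = X.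
Proof.
  intros X1 Xu. rewrite smul_E_l by (split; [exact X1 | now right]).
  apply set_ext. intros z. split.
  - now intros [[Hz _] | ->].
  - intros Hz. destruct (nonunits1_or_u z) as [Kz | ->]; [left; now split | now right].
Qed.

Lemma nonunits_part_E_smul W :
  W one -> (forall z, W z -> nonunits1 z) -> set_inter (smul E W) nonunits1 = W.
Proof.
  intros W1 HW. rewrite smul_E_l by exact W1. apply set_ext. intros z. split.
  - intros [[Hz | ->] Kz]; [exact Hz | now apply not_nonunits1_u in Kz].
  - intros Hz. split; [now left | now apply HW].
Qed.

Lemma atom_full_E : atom full E.
Proof. now apply atom_pair1. Qed.

Lemma atom_full_with_u A : atom full A -> A u -> A = E.
Proof.
  intros (DA & _ & Hat) Au.
  assert (DKA : Pfin1_dom one full (set_inter A nonunits1)).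
  { apply (Pfin1_subset DA); [split; [exact (Pfin1_has_one DA) | now right] | now intros z []]. }
  destruct (Hat E _ (proj1 atom_full_E) DKA) as [HE | HK].
  - symmetry. apply E_smul_nonunits_part; [exact (Pfin1_has_one DA) | exact Au].
  - now symmetry.
  - rewrite <- HK in Au. destruct Au as [_ Ku]. now apply not_nonunits1_u in Ku.
Qed.

Lemma atom_full_nonunits1 A : atom full A -> A <> E -> atom nonunits1 A.
Proof.
  intros HA HAE. assert (DKA : DK A).
  { destruct (proj1 HA) as ([l Hl] & A1 & _). split; [now exists l | split; [exact A1|]].
    intros z Hz. destruct (nonunits1_or_u z) as [Kz | ->]; [exact Kz|].
    exfalso. apply HAE. now apply atom_full_with_u. }
  now apply (atom_transfer _ nonunits1_full DKA).
Qed.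

Lemma wp_remove_E a :
  Forall (fun A => A one) a -> In E a -> wp a = smul E (wp (remove_E a)).
Proof.
  induction 1 as [|A a A1 Ha1 IH]; intros HEa; [contradiction|]. simpl.
  destruct (classic_eq_dec E A) as [<- | HEA].
  - destruct (in_dec classic_eq_dec E a) as [HEa' | HEa'].
    + now rewrite (IH HEa'), smulA, smul_EE.
    + now rewrite notin_remove.
  - destruct HEa as [HAE | HEa]; [congruence|]. simpl.
    now rewrite (IH HEa), smulA, <- (smul_E_comm _ A1), <- smulA.
Qed.

Lemma min_atom_fact_through_E a X :
  X u -> min_atom_fact full a X ->
  Permutation a (E :: remove_E a) /\
  min_atom_fact nonunits1 (remove_E a) (set_inter X nonunits1).
Proof.
  intros Xu [[Ha HaX] Hmin].
  assert (Ha1 : Forall (fun A => A one) a)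
    by (refine (Forall_impl _ _ Ha); intros A HA; exact (Pfin1_has_one (proj1 HA))).
  assert (FK : Forall (atom nonunits1) (remove_E a)).
  { apply Forall_forall. intros A HA. apply in_remove in HA as [HA HAE].
    apply atom_full_nonunits1; [exact (proj1 (Forall_forall _ _) Ha A HA) | exact HAE]. }
  set (W := wp (remove_E a)).
  assert (DW : DK W).
  { apply Pfin1_wp; [now right | exact nonunits1_mul|].
    refine (Forall_impl _ _ FK). now intros A []. }
  assert (HEa : In E a).
  { apply NNPP. intros HEa. apply not_nonunits1_u, (proj2 (proj2 DW)).
    unfold W. rewrite notin_remove by exact HEa. now rewrite HaX. }
  assert (HXW : X = smul E W) by (rewrite <- HaX; now apply wp_remove_E).
  assert (Hlift : forall c, atom_fact nonunits1 c W -> atom_fact full (E :: c) X).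
  { intros c [Hc HcW]. split.
    - constructor; [exact atom_full_E|]. refine (Forall_impl _ _ Hc). intros A HA.
      now apply (atom_transfer _ nonunits1_full (proj1 HA)).
    - simpl. now rewrite HcW. }
  (* [E :: remove_E a] is a factorization of X contained in [a]: E occurs exactly once. *)
  assert (Hperm : Permutation a (E :: remove_E a)).
  { apply Hmin; [now apply Hlift | now apply submultiset_cons_remove]. }
  split; [exact Hperm|].
  rewrite HXW, nonunits_part_E_smul by (apply DW).
  split; [now split|]. intros c Hc [r Hr].
  apply (Permutation_cons_inv (a := E)). rewrite <- Hperm. apply Hmin; [now apply Hlift|].
  exists r. rewrite Hperm. now apply perm_skip.
Qed.

Lemma umf_full_of_nontrivial_unit X a b :
  Pfin1_dom one full X -> min_atom_fact full a X -> min_atom_fact full b X ->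
  Permutation a b.
Proof.
  intros DX Ha Hb. destruct (classic (X u)) as [Xu | Xu].
  - destruct (min_atom_fact_through_E Xu Ha) as [Pa Ma].
    destruct (min_atom_fact_through_E Xu Hb) as [Pb Mb].
    rewrite Pa, Pb. apply perm_skip. exact (umfK (Pfin1_nonunits_part DX) Ma Mb).
  - assert (DKX : DK X).
    { apply (Pfin1_subset (Pfin1_nonunits_part DX)); [exact (Pfin1_has_one DX)|].
      intros z Hz. split; [exact Hz|]. destruct (nonunits1_or_u z) as [Kz | ->]; tauto. }
    apply (umfK DKX); now apply (min_atom_fact_transfer _ nonunits1_full _ DKX).
Qed.

End NontrivialUnit.

Lemma Pfin1_UmF_full_of_nonunits1 : Pfin1_UmF mul one full.
Proof.
  apply Pfin1_UmF_iff; [exact I|].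
  destruct (classic (exists u, unit u /\ u <> one)) as [(u & Hu & Hu1) | Hno].
  - exact (umf_full_of_nontrivial_unit Hu Hu1).
  - assert (Hfull : nonunits1 = full).
    { apply set_ext. intros z. split; [trivial|]. intros _.
      destruct (classic (unit z)) as [Hz | Hz]; [right | now left].
      apply NNPP. intros Hz1. apply Hno. now exists z. }
    rewrite <- Hfull. exact umfK.
Qed.

End FromUnitStructure.

End PowerMonoid.

Theorem theorem3p6 (H : Type) (mul : H -> H -> H) (one : H)
  (Hmon : is_monoid mul one) :
  Pfin1_UmF mul one (fun _ => True) <->
  (subsemigroup mul (fun x => ~ is_unit mul one x) /\
   almost_breakable mul (fun x => ~ is_unit mul one x) /\
   units_order_le2 mul one /\
   trivial_ideal_extension mul one /\
   Pfin1_UmF mul one (fun x => ~ is_unit mul one x \/ x = one)).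
Proof.
  destruct Hmon as (mulA & mul1x & mulx1). split.
  - intros U.
    pose proof (proj1 (Pfin1_UmF_iff _ _ mulA mul1x mulx1 (fun _ => True) I) U) as umf.
    split; [|split; [|split; [|split]]].
    + exact (nonunits_mul_closed mulA mul1x mulx1 umf).
    + exact (umf_almost_breakable mulA mul1x mulx1 umf).
    + exact (umf_units_order_le2 mulA mul1x mulx1 umf).
    + exact (umf_trivial_ideal_extension mulA mul1x mulx1 umf).
    + exact (umf_nonunits1 mulA mul1x mulx1 umf).
  - intros (Hclosed & _ & Hle2 & Htie & UK).
    pose proof (proj1 (Pfin1_UmF_iff _ _ mulA mul1x mulx1 (nonunits1 mul one)
      (or_intror eq_refl)) UK) as umfK.
    exact (Pfin1_UmF_full_of_nonunits1 mulA mul1x mulx1 Hclosed Hle2 Htie umfK).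
Qed.
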